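(* For every tetrahedral erasure channel $W$, $A(W^{s})+A(W^{p})\le A(W)$.
   Context: $\mathrm{TEC}(p,q,r,s,t)$ denotes a tetrahedral erasure channel with parameters $p,q,r,s,t\ge0$ summing to $1$; its moment of inertia is $A=(q-r)^2+(r-s)^2+(s-q)^2$. For $W=\mathrm{TEC}(p,q,r,s,t)$, the serial child is $W^{s}=\mathrm{TEC}(p^2,\ ps+sq+qp,\ pq+qr+rp,\ pr+rs+sp,\ 1-\text{(sum of the other four)})$ and the parallel child is $W^{p}=\mathrm{TEC}(1-\text{(sum of the other four)},\ ts+sq+qt,\ tq+qr+rt,\ tr+rs+st,\ t^2)$. *)

From Stdlib Require Import Reals Lra.
Open Scope R_scope.

Record TEC := mkTEC { tp : R; tq : R; tr : R; ts : R; tt : R }.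

Definition valid_TEC (W : TEC) : Prop :=
  0 <= tp W /\ 0 <= tq W /\ 0 <= tr W /\ 0 <= ts W /\ 0 <= tt W /\
  tp W + tq W + tr W + ts W + tt W = 1.

Definition inertia (W : TEC) : R :=
  (tq W - tr W)^2 + (tr W - ts W)^2 + (ts W - tq W)^2.

Definition serial_child (W : TEC) : TEC :=
  let p := tp W in let q := tq W in let r := tr W in let s := ts W in
  let p' := p^2 in
  let q' := p*s + s*q + q*p in
  let r' := p*q + q*r + r*p in
  let s' := p*r + r*s + s*p in
  mkTEC p' q' r' s' (1 - (p' + q' + r' + s')).

Definition parallel_child (W : TEC) : TEC :=
  let q := tq W in let r := tr W in let s := ts W in let t := tt W in
  let q' := t*s + s*q + q*t in
  let r' := t*q + q*r + r*t in
  let s' := t*r + r*s + s*t in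
  let t' := t^2 in
  mkTEC (1 - (q' + r' + s' + t')) q' r' s' t'.

(** Both children have differences that factor: in [W^s] one has
    [q' - r' = (p + q)(s - r)], in [W^p] one has [q' - r' = (t + q)(s - r)],
    and cyclically.  So [A(W^s) + A(W^p)] is [A(W)] with each term [(r - s)^2]
    reweighted by [(p + q)^2 + (t + q)^2 <= (p + t + q)^2 + q^2], which
    eliminates [p] and [t] except through [k = p + t].  Homogenising with
    [k + q + r + s = 1], the remaining gap is [2 k] times a nonnegative cubic
    plus a symmetric quartic in [q, r, s]; for [q >= r >= s >= 0] the latter
    has nonnegative coefficients in the variables [s, r - s, q - r]. *)

From Stdlib Require Import Reals Lra.
Open Scope R_scope.

Lemma inertia_serial_child (W : TEC) :
  inertia (serial_child W) =
  (tp W + tq W)^2 * (tr W - ts W)^2 + (tp W + tr W)^2 * (ts W - tq W)^2 +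
  (tp W + ts W)^2 * (tq W - tr W)^2.
Proof. unfold inertia, serial_child; simpl; ring. Qed.

Lemma inertia_parallel_child (W : TEC) :
  inertia (parallel_child W) =
  (tt W + tq W)^2 * (tr W - ts W)^2 + (tt W + tr W)^2 * (ts W - tq W)^2 +
  (tt W + ts W)^2 * (tq W - tr W)^2.
Proof. unfold inertia, parallel_child; simpl; ring. Qed.

Lemma sqr_shift_add_le (a b c : R) :
  0 <= a -> 0 <= b -> (a + c)^2 + (b + c)^2 <= (a + b + c)^2 + c^2.
Proof. intros Ha Hb; nra. Qed.

Definition quartic_gap (q r s : R) : R :=
  (r - s)^2 * ((q + r + s)^2 - 2 * q^2) +
  (s - q)^2 * ((q + r + s)^2 - 2 * r^2) +
  (q - r)^2 * ((q + r + s)^2 - 2 * s^2).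

Lemma quartic_gap_swap (q r s : R) : quartic_gap q r s = quartic_gap r q s.
Proof. unfold quartic_gap; ring. Qed.

Lemma quartic_gap_rot (q r s : R) : quartic_gap q r s = quartic_gap r s q.
Proof. unfold quartic_gap; ring. Qed.

Lemma quartic_gap_sorted_nonneg (q r s : R) :
  0 <= s -> s <= r -> r <= q -> 0 <= quartic_gap q r s.
Proof.
  intros Hs Hsr Hrq.
  replace (quartic_gap q r s) with
    (let x := r - s in let y := q - r in
     2 * y^4 + 10 * x * y^3 + 14 * x^2 * y^2 + 8 * x^3 * y + 4 * x^4
     + s * (12 * y^3 + 32 * x * y^2 + 24 * x^2 * y + 16 * x^3)
     + 14 * s^2 * (y^2 + x * y + x^2))
    by (unfold quartic_gap; simpl; ring).
  assert (Hx : 0 <= r - s) by lra.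
  assert (Hy : 0 <= q - r) by lra.
  revert Hx Hy; generalize (r - s) (q - r); intros x y Hx Hy; cbv zeta.
  repeat (apply Rplus_le_le_0_compat || apply Rmult_le_pos);
    try apply pow_le; lra.
Qed.

Lemma quartic_gap_nonneg (q r s : R) :
  0 <= q -> 0 <= r -> 0 <= s -> 0 <= quartic_gap q r s.
Proof.
  assert (last_min : forall a b c, 0 <= c -> c <= b -> c <= a ->
            0 <= quartic_gap a b c).
  { intros a b c Hc Hcb Hca.
    destruct (Rle_or_lt b a) as [Hba | Hab].
    - apply quartic_gap_sorted_nonneg; lra.
    - rewrite quartic_gap_swap; apply quartic_gap_sorted_nonneg; lra. }
  intros Hq Hr Hs.
  destruct (Rle_or_lt s r), (Rle_or_lt s q), (Rle_or_lt r q);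
    first [ apply last_min; lra
          | rewrite quartic_gap_rot; apply last_min; lra
          | rewrite <- quartic_gap_rot; apply last_min; lra ].
Qed.

Lemma weighted_inertia_le (k q r s : R) :
  0 <= k -> 0 <= q -> 0 <= r -> 0 <= s ->
  (r - s)^2 * ((k + q)^2 + q^2) + (s - q)^2 * ((k + r)^2 + r^2) +
  (q - r)^2 * ((k + s)^2 + s^2)
  <= (k + q + r + s)^2 * ((q - r)^2 + (r - s)^2 + (s - q)^2).
Proof.
  intros Hk Hq Hr Hs.
  (* [(k + q + r + s)^2 - (k + q)^2 - q^2 = (q + r + s)^2 - 2 q^2 + 2 k (r + s)] *)
  assert (Hgap := quartic_gap_nonneg q r s Hq Hr Hs).
  assert (Hslack : 0 <= (r - s)^2 * (r + s) + (s - q)^2 * (s + q) + (q - r)^2 * (q + r)).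
  { repeat apply Rplus_le_le_0_compat; apply Rmult_le_pos;
      try apply pow2_ge_0; lra. }
  unfold quartic_gap in Hgap.
  nra.
Qed.

Lemma children_inertia_le (p q r s t : R) :
  0 <= p -> 0 <= q -> 0 <= r -> 0 <= s -> 0 <= t ->
  (r - s)^2 * ((p + q)^2 + (t + q)^2) + (s - q)^2 * ((p + r)^2 + (t + r)^2) +
  (q - r)^2 * ((p + s)^2 + (t + s)^2)
  <= (p + t + q + r + s)^2 * ((q - r)^2 + (r - s)^2 + (s - q)^2).
Proof.
  intros Hp Hq Hr Hs Ht.
  assert (Hweight : forall c d,
            d^2 * ((p + c)^2 + (t + c)^2) <= d^2 * ((p + t + c)^2 + c^2)).
  { intros c d; apply Rmult_le_compat_l;
      [apply pow2_ge_0 | apply sqr_shift_add_le; assumption]. }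
  pose proof (Hweight q (r - s)); pose proof (Hweight r (s - q));
    pose proof (Hweight s (q - r)).
  pose proof (weighted_inertia_le (p + t) q r s ltac:(lra) Hq Hr Hs).
  lra.
Qed.

Theorem mainTheorem4 (W : TEC) (hW : valid_TEC W) :
  inertia (serial_child W) + inertia (parallel_child W) <= inertia W.
Proof.
  rewrite inertia_serial_child, inertia_parallel_child.
  destruct W as [p q r s t], hW as (Hp & Hq & Hr & Hs & Ht & Hsum);
    unfold inertia; simpl in *.
  pose proof (children_inertia_le p q r s t Hp Hq Hr Hs Ht) as Hle.
  replace (p + t + q + r + s) with 1 in Hle by lra.
  lra.
Qed.
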